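(* Let $r,s$ be positive integers and let $G$ be a complete $r$-partite graph on $n$ vertices that does not contain $M_{s+1}$ as a subgraph. If $n>2s+1$, then some part of $G$ has order at least $n-s$.
   Context: $M_{s+1}$ denotes the graph consisting of $s+1$ pairwise disjoint edges. *)

From mathcomp Require Import all_boot.
Set Implicit Arguments. Unset Strict Implicit. Unset Printing Implicit Defensive.

Definition complete_multipartite_rel (T : finType) (P : {set {set T}}) : rel T :=
  fun x y => pblock P x != pblock P y.

Definition complete_partite_with (T : finType) (r : nat) (e : rel T)
    (P : {set {set T}}) : Prop :=
  [/\ partition P [set: T], #|P| = r &
      forall x y, e x y = complete_multipartite_rel P x y].

Definition has_matching (T : finType) (e : rel T) (k : nat) : Prop :=
  exists M : seq (T * T),
    [/\ size M = k, all (fun p => e p.1 p.2) M &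
        uniq (flatten [seq [:: p.1; p.2] | p <- M])].

From mathcomp Require Import all_boot.
From mathcomp Require Import zify.

Set Implicit Arguments.
Unset Strict Implicit.
Unset Printing Implicit Defensive.

(* Colour each vertex by its part.  If every colour class of a set S misses at
   least k vertices of S and #|S| >= 2k, then S contains k disjoint bichromatic
   pairs: pair a vertex x of a largest class with any y of another colour and
   recurse on S minus {x, y}.  Removing x and y shrinks the classes of x and y;
   any other class z is at most as large as that of x and disjoint from it and
   from y, so 2 #|class z| < #|S|, which keeps the bound for k - 1. *)

Section Matchings.

Variable T : finType.

Definition rel_in (S : {set T}) (e : rel T) : rel T :=
  [rel x y | [&& x \in S, y \in S & e x y]].

Lemma has_matching_sub (e e' : rel T) k :
  subrel e e' -> has_matching e k -> has_matching e' k.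
Proof.
move=> ee' [M [sizeM eM uniqM]]; exists M; split=> //.
by apply/allP=> p /(allP eM) /ee'.
Qed.

Lemma has_matching_in_cons (e : rel T) (S : {set T}) x y k :
  x \in S -> y \in S -> x != y -> e x y ->
  has_matching (rel_in (S :\ x :\ y) e) k -> has_matching (rel_in S e) k.+1.
Proof.
move=> xS yS neq_xy exy [M [sizeM eM uniqM]].
have vM_in v : v \in flatten [seq [:: p.1; p.2] | p <- M] -> v \in S :\ x :\ y.
  case/flatten_mapP=> p /(allP eM) /and3P[p1S p2S _].
  by rewrite mem_seq2 => /orP[] /eqP->.
exists ((x, y) :: M); split=> /=; first by rewrite sizeM.
- rewrite /rel_in /= xS yS exy; apply/allP=> p /(allP eM) /and3P[].
  by rewrite /= !inE => /and3P[_ _ ->] /and3P[_ _ ->].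
- rewrite uniqM andbT inE negb_or neq_xy.
  by apply/andP; split; apply/negP=> /vM_in; rewrite !inE eqxx /= ?andbF.
Qed.

Lemma cardsD2 (S : {set T}) x y : x \in S -> y \in S -> x != y ->
  #|S| = #|S :\ x :\ y|.+2.
Proof.
move=> xS yS neq_xy.
by rewrite (cardsD1 x) (cardsD1 y (S :\ x)) !inE xS yS eq_sym neq_xy.
Qed.

Variables (U : eqType) (f : T -> U).

Definition colour_class (S : {set T}) (z : T) : {set T} :=
  [set w in S | f w == f z].

Lemma card_colour_class_setD1 (S : {set T}) x z : x \in S ->
  #|colour_class S z| = (f x == f z) + #|colour_class (S :\ x) z|.
Proof.
move=> xS; have -> : colour_class (S :\ x) z = colour_class S z :\ x.
  by apply/setP=> w; rewrite !inE andbA.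
by rewrite (cardsD1 x (colour_class S z)) !inE xS.
Qed.

Lemma card_colour_classes2 (S : {set T}) x z : f x != f z ->
  #|colour_class S x| + #|colour_class S z| <= #|S|.
Proof.
move=> fxz; rewrite -cardsUI.
have -> : colour_class S x :&: colour_class S z = set0.
  apply/setP=> w; rewrite !inE; apply/negbTE/negP.
  case/andP=> /andP[_ /eqP fwx] /andP[_ /eqP fwz].
  by rewrite -fwx fwz eqxx in fxz.
rewrite cards0 addn0; apply: subset_leq_card.
by apply/subsetP=> w; rewrite !inE => /orP[] /andP[].
Qed.

Lemma colour_class_max_in (S : {set T}) x : x \in S ->
  {in S, forall z, #|colour_class S z| <= #|colour_class S x|} ->
  forall z, #|colour_class S z| <= #|colour_class S x|.
Proof.
move=> xS xmax z; have [-> | [w]] := set_0Vmem (colour_class S z).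
  by rewrite cards0.
case/setIdP=> wS /eqP fwz.
have -> : colour_class S z = colour_class S w.
  by apply/setP=> v; rewrite !inE fwz.
exact: xmax.
Qed.

Lemma colour_class_bound_setD2 (S : {set T}) x y k :
  x \in S -> y \in S -> f x != f y ->
  (forall z, #|colour_class S z| <= #|colour_class S x|) ->
  2 * k.+1 <= #|S| ->
  (forall z, #|colour_class S z| + k.+1 <= #|S|) ->
  forall z, #|colour_class (S :\ x :\ y) z| + k <= #|S :\ x :\ y|.
Proof.
move=> xS yS fxy xmax Sbig Sbound z.
have neq_xy : x != y by apply: contraNneq fxy => ->.
have yS' : y \in S :\ x by rewrite !inE yS eq_sym neq_xy.
have cardS := cardsD2 xS yS neq_xy.
have clz := card_colour_class_setD1 z xS.
have clz' := card_colour_class_setD1 z yS'.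
have bz := Sbound z.
case: (eqVneq (f x) (f z)) => [fxz | fxz] in clz *.
  have fyz : (f y == f z) = false by rewrite -fxz eq_sym (negbTE fxy).
  rewrite fyz /= in clz'; lia.
case: (eqVneq (f y) (f z)) => [fyz | fyz] in clz' *; first lia.
have clx := card_colour_class_setD1 x yS; rewrite eq_sym (negbTE fxy) in clx.
have clzy := card_colour_class_setD1 z yS; rewrite (negbTE fyz) in clzy.
have two := card_colour_classes2 (S :\ y) fxz.
have ySy := cardsD1 y S; rewrite yS in ySy.
have := xmax z; lia.
Qed.

Lemma has_matching_bichromatic k (S : {set T}) :
  2 * k <= #|S| -> (forall z, #|colour_class S z| + k <= #|S|) ->
  has_matching (rel_in S (fun x y => f x != f y)) k.
Proof.
elim: k S => [|k IHk] S Sbig Sbound; first by exists [::].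
have [x0 x0S] : {x0 | x0 \in S} by apply/sigW/card_gt0P; lia.
case: (arg_maxnP (fun z => #|colour_class S z|) x0S) => x xS xmax.
have [y /andP[yS fxy] | monochrome] := pickP [pred y | (y \in S) && (f x != f y)].
  have neq_xy : x != y by apply: contraNneq fxy => ->.
  apply: (has_matching_in_cons xS yS neq_xy) => //.
  apply: IHk; first by move: Sbig; rewrite (cardsD2 xS yS neq_xy); lia.
  apply: colour_class_bound_setD2 => //.
  exact: colour_class_max_in xS xmax.
have : S \subset colour_class S x.
  apply/subsetP=> w wS; rewrite inE wS eq_sym.
  by have := monochrome w; rewrite /= wS => /negbFE.
by move/subset_leq_card; have := Sbound x; lia.
Qed.

End Matchings.

Theorem proposition12 (T : finType) (r s : nat) (e : rel T) (P : {set {set T}}) :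
  0 < r -> 0 < s ->
  complete_partite_with r e P ->
  ~ has_matching e s.+1 ->
  2 * s + 1 < #|T| ->
  exists2 A, A \in P & #|T| - s <= #|A|.
Proof.
move=> _ _ [partP _ eE] noM nbig.
have [A /andP[AP Abig] | small] := pickP [pred A | (A \in P) && (#|T| - s <= #|A|)].
  by exists A.
case: noM; case/and3P: partP => /eqP coverP trivP _.
have zP z : z \in cover P by rewrite coverP inE.
have classE z : colour_class (pblock P) [set: T] z = pblock P z.
  by apply/setP=> w; rewrite !inE eq_sym eq_pblock.
have Tbig : 2 * s.+1 <= #|[set: T]| by rewrite cardsT; lia.
have parts_small z : #|colour_class (pblock P) [set: T] z| + s.+1 <= #|[set: T]|.
  rewrite classE cardsT.
  by have := small (pblock P z); rewrite /= pblock_mem //= => /negbT; lia.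
apply: has_matching_sub (has_matching_bichromatic Tbig parts_small).
by move=> x y /and3P[_ _]; rewrite eE.
Qed.
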